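(* For any $y\in\mathbb{R}^n$ and any $\bar y$ with $A\bar y\le b$, $$\big\langle\bar y-y,\ \mathbb{E}_{\mathbb{S}}[a_{i^*}(a_{i^*}^Ty-b_{i^*})^+]\big\rangle=\langle\bar y-y,\nabla f(y)\rangle\le-2f(y)\le-\mu_1d(y,P)^2,$$ where $i^*$ is selected at the point $y$.
   Context: Let $A\in\mathbb{R}^{m\times n}$ have rows $a_1^T,\dots,a_m^T$ with $\|a_i\|_2=1$, and $b\in\mathbb{R}^m$; assume $Ax\le b$ is consistent and let $P=\{x:Ax\le b\}$, $\mathcal{P}(x)$ the Euclidean projection onto $P$, $d(x,P)=\|x-\mathcal{P}(x)\|$, $t^+=\max\{t,0\}$. Fix an integer $1\le\beta\le m$. Sampling distribution $\mathbb{S}$ at $y$: $\tau\subseteq\{1,\dots,m\}$ with $|\tau|=\beta$ uniformly at random, and $i^*\in\tau$ maximizing $(a_i^Ty-b_i)^+$ over $\tau$; $\mathbb{E}_{\mathbb{S}}$ is expectation over $\tau$. $f(y)=\mathbb{E}_{\mathbb{S}}[\frac12|(a_{i^*}^Ty-b_{i^*})^+|^2]$ and $\nabla f(y):=\mathbb{E}_{\mathbb{S}}[(a_{i^*}^Ty-b_{i^*})^+a_{i^*}]$. $L>0$ is a Hoffman constant ($d(x,P)^2\le L^2\|(Ax-b)^+\|^2$ for all $x$); $\mu_1=\frac1{mL^2}$. *)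

From HB Require Import structures.
From mathcomp Require Import all_boot all_order all_algebra.
From mathcomp Require Import classical_sets reals.
Set Implicit Arguments. Unset Strict Implicit. Unset Printing Implicit Defensive.
Import Order.TTheory GRing.Theory Num.Theory.
Local Open Scope ring_scope.
Local Open Scope classical_set_scope.

(* vectors of R^n are functions 'I_n -> R; A is an m x n matrix, row i = a_i *)
Definition dot (R : realType) (n : nat) (u v : 'I_n -> R) : R :=
  \sum_(j < n) u j * v j.

Definition enorm (R : realType) (n : nat) (u : 'I_n -> R) : R :=
  Num.sqrt (dot u u).

Definition pos (R : realType) (t : R) : R := Num.max t 0.

Definition resid (R : realType) (m n : nat) (A : 'M[R]_(m, n)) (b : 'I_m -> R)
  (y : 'I_n -> R) (i : 'I_m) : R := \sum_(j < n) A i j * y j - b i.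

Definition feasible (R : realType) (m n : nat) (A : 'M[R]_(m, n)) (b : 'I_m -> R)
  (x : 'I_n -> R) : Prop := forall i, resid A b x i <= 0.

Definition dist (R : realType) (m n : nat) (A : 'M[R]_(m, n)) (b : 'I_m -> R)
  (x : 'I_n -> R) : R :=
  inf [set r : R | exists z, feasible A b z /\ r = enorm (fun j => x j - z j)].

(* E_S over tau uniformly distributed among subsets of {1..m} of size beta *)
Definition Esamp (R : realType) (m beta : nat) (g : {set 'I_m} -> R) : R :=
  (\sum_(tau : {set 'I_m} | #|tau| == beta) g tau)
    / (#|[set tau : {set 'I_m} | #|tau| == beta]|)%:R.

(* sel tau = i^* : an element of tau maximizing (a_i^T y - b_i)^+ over tau *)
Definition is_sel (R : realType) (m n : nat) (A : 'M[R]_(m, n)) (b : 'I_m -> R)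
  (beta : nat) (y : 'I_n -> R) (sel : {set 'I_m} -> 'I_m) : Prop :=
  forall tau : {set 'I_m}, #|tau| = beta ->
    sel tau \in tau /\
    (forall i, i \in tau -> pos (resid A b y i) <= pos (resid A b y (sel tau))).

Definition fobj (R : realType) (m n : nat) (A : 'M[R]_(m, n)) (b : 'I_m -> R)
  (beta : nat) (sel : {set 'I_m} -> 'I_m) (y : 'I_n -> R) : R :=
  Esamp beta (fun tau => (pos (resid A b y (sel tau))) ^+ 2 / 2).

Definition gradf (R : realType) (m n : nat) (A : 'M[R]_(m, n)) (b : 'I_m -> R)
  (beta : nat) (sel : {set 'I_m} -> 'I_m) (y : 'I_n -> R) : 'I_n -> R :=
  fun j => Esamp beta (fun tau => pos (resid A b y (sel tau)) * A (sel tau) j).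

(* For ybar feasible, a_i^T (ybar - y) = r_i(ybar) - r_i(y) <= -r_i(y),
   where r_i is the i-th residual, and t^+ (s - t) <= -(t^+)^2 for s <= 0; averaging
   over tau at i = i* gives <ybar - y, grad f(y)> <= -2 f(y).  For the second bound,
   every index lies in the same number of beta-subsets, so the mean over tau of
   sum_{i in tau} (r_i^+)^2 is (beta/m) ||(Ay - b)^+||^2; as i* maximizes r_i^+ on tau,
   that mean is at most beta E[(r_{i*}^+)^2] = 2 beta f(y), and Hoffman's bound
   ||(Ay - b)^+||^2 >= d(y,P)^2 / L^2 concludes. *)

From HB Require Import structures.
From mathcomp Require Import all_boot all_order all_algebra perm.
From mathcomp Require Import classical_sets reals.
From mathcomp Require Import boolp ring lra.
Set Implicit Arguments. Unset Strict Implicit. Unset Printing Implicit Defensive.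
Import Order.TTheory GRing.Theory Num.Theory.
Local Open Scope ring_scope.

Section UniformDraws.
Variables (R : realType) (m beta : nat).

Lemma card_sample_space :
  #|[set tau : {set 'I_m} | #|tau| == beta]%classic| = 'C(m, beta).
Proof.
rewrite -[in RHS](card_ord m) -card_draws; apply: eq_card => tau.
by rewrite !inE; apply/idP/idP => [/set_mem | /mem_set].
Qed.

Lemma EsampZ (c : R) (g : {set 'I_m} -> R) :
  Esamp beta (fun tau => c * g tau) = c * Esamp beta g.
Proof. by rewrite /Esamp -mulr_sumr mulrA. Qed.

Lemma ler_Esamp (g h : {set 'I_m} -> R) :
  (forall tau : {set 'I_m}, #|tau| = beta -> g tau <= h tau) ->
  Esamp beta g <= Esamp beta h.
Proof.
move=> gh; apply: ler_wpM2r; first by rewrite invr_ge0 ler0n.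
by apply: ler_sum => tau /eqP; apply: gh.
Qed.

Lemma dot_Esamp (n : nat) (u : 'I_n -> R) (F : {set 'I_m} -> 'I_n -> R) :
  dot u (fun j => Esamp beta (F^~ j)) = Esamp beta (fun tau => dot u (F tau)).
Proof.
rewrite /dot /Esamp exchange_big mulr_suml; apply: eq_bigr => j _.
by rewrite mulrA mulr_sumr.
Qed.

Definition draws_through (i : 'I_m) : nat :=
  \sum_(tau : {set 'I_m} | #|tau| == beta) (i \in tau).

Lemma draws_through_const (i j : 'I_m) : draws_through i = draws_through j.
Proof.
rewrite /draws_through (reindex_inj (imset_inj (@perm_inj _ (tperm i j)))) /=.
apply: eq_big => [tau | tau _]; first by rewrite card_imset //; apply: perm_inj.
by rewrite -{1}(tpermR i j) mem_imset //; apply: perm_inj.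
Qed.

Lemma sum_draws_through : (\sum_i draws_through i = beta * 'C(m, beta))%N.
Proof.
rewrite /draws_through exchange_big /=.
transitivity (\sum_(tau : {set 'I_m} | #|tau| == beta) beta)%N.
  apply: eq_bigr => tau /eqP <-; rewrite -sum1_card [RHS]big_mkcond.
  by apply: eq_bigr => i _; case: (i \in tau).
by rewrite sum_nat_const mulnC -cardsE card_draws card_ord.
Qed.

Lemma sum_draws_mem (g : 'I_m -> R) :
  \sum_(tau : {set 'I_m} | #|tau| == beta) \sum_(i in tau) g i
    = \sum_i (draws_through i)%:R * g i.
Proof.
transitivity (\sum_(tau : {set 'I_m} | #|tau| == beta) \sum_i (i \in tau)%:R * g i).
  apply: eq_bigr => tau _; rewrite big_mkcond; apply: eq_bigr => i _.
  by case: (i \in tau); rewrite ?mul1r ?mul0r.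
by rewrite exchange_big; apply: eq_bigr => i _; rewrite -mulr_suml -natr_sum.
Qed.

Lemma Esamp_sum_mem (g : 'I_m -> R) : (0 < beta <= m)%N ->
  Esamp beta (fun tau => \sum_(i in tau) g i) = beta%:R / m%:R * \sum_i g i.
Proof.
case/andP=> beta_gt0 beta_le_m.
have m_gt0 : (0 < m)%N by apply: leq_trans beta_le_m.
pose i0 := Ordinal m_gt0.
have m_draws : m%:R * (draws_through i0)%:R = beta%:R * 'C(m, beta)%:R :> R.
  rewrite -!natrM -sum_draws_through (eq_bigr (fun => draws_through i0)).
    by rewrite sum_nat_const card_ord.
  by move=> i _; apply: draws_through_const.
rewrite /Esamp card_sample_space sum_draws_mem.
under eq_bigr => i _ do rewrite (draws_through_const i i0).
rewrite -mulr_sumr mulrAC; congr (_ * _); apply/eqP.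
by rewrite eqr_div ?pnatr_eq0 -?lt0n ?bin_gt0 // mulrC m_draws mulrC.
Qed.

Lemma mean_le_Esamp_max (g : 'I_m -> R) (sel : {set 'I_m} -> 'I_m) :
  (0 < beta <= m)%N ->
  (forall tau : {set 'I_m}, #|tau| = beta -> forall i, i \in tau -> g i <= g (sel tau)) ->
  (\sum_i g i) / m%:R <= Esamp beta (fun tau => g (sel tau)).
Proof.
move=> hbeta sel_max; have beta_gt0 : 0 < beta%:R :> R by rewrite ltr0n; case/andP: hbeta.
rewrite -(ler_pM2l beta_gt0) mulrCA [leLHS]mulrC -Esamp_sum_mem // -EsampZ.
apply: ler_Esamp => tau card_tau.
rewrite -card_tau mulr_natl -sumr_const.
by apply: ler_sum => i /sel_max; apply.
Qed.

End UniformDraws.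

Lemma pos_ge0 (R : realType) (t : R) : 0 <= pos t.
Proof. by rewrite /pos le_max lexx orbT. Qed.

Lemma pos_mul_subr_le (R : realType) (r s : R) :
  s <= 0 -> pos r * (s - r) <= - pos r ^+ 2.
Proof.
rewrite /pos => s_le0; case: ler0P => [_ | r_gt0].
  by rewrite mul0r expr0n oppr0.
rewrite expr2; nra.
Qed.

Lemma dotC (R : realType) (n : nat) (u v : 'I_n -> R) : dot u v = dot v u.
Proof. by apply: eq_bigr => j _; rewrite mulrC. Qed.

Lemma dotZr (R : realType) (n : nat) (c : R) (u v : 'I_n -> R) :
  dot u (fun j => c * v j) = c * dot u v.
Proof. by rewrite /dot mulr_sumr; apply: eq_bigr => j _; rewrite mulrCA. Qed.

Lemma dot_row_sub (R : realType) (m n : nat) (A : 'M[R]_(m, n)) (b : 'I_m -> R)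
    (z y : 'I_n -> R) (i : 'I_m) :
  dot (fun j => A i j) (fun j => z j - y j) = resid A b z i - resid A b y i.
Proof.
rewrite /dot /resid opprB addrA subrK -sumrB.
by apply: eq_bigr => j _; rewrite mulrBr.
Qed.

Theorem lemma8 (R : realType) (m n : nat) (A : 'M[R]_(m, n)) (b : 'I_m -> R)
  (beta : nat) (L : R)
  (hrows : forall i : 'I_m, enorm (fun j => A i j) = 1)
  (hcons : exists x, feasible A b x)
  (hbeta : (1 <= beta <= m)%N)
  (hL : 0 < L)
  (hHoff : forall x : 'I_n -> R,
     dist A b x ^+ 2 <= L ^+ 2 * \sum_(i < m) (pos (resid A b x i)) ^+ 2)
  (y ybar : 'I_n -> R) (sel : {set 'I_m} -> 'I_m)
  (hsel : is_sel A b beta y sel)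
  (hybar : feasible A b ybar) :
  let mu1 := 1 / (m%:R * L ^+ 2) in
  let d := fun j => ybar j - y j in
  dot d (fun j => Esamp beta
           (fun tau => A (sel tau) j * pos (resid A b y (sel tau))))
    = dot d (gradf A b beta sel y)
  /\ dot d (gradf A b beta sel y) <= - 2 * fobj A b beta sel y
  /\ - 2 * fobj A b beta sel y <= - mu1 * dist A b y ^+ 2.
Proof.
move=> mu1 d; pose g i := pos (resid A b y i) ^+ 2.
have fobjE : - 2 * fobj A b beta sel y = - Esamp beta (fun tau => g (sel tau)).
  rewrite /fobj -EsampZ -[RHS]mulN1r -EsampZ; congr Esamp; apply/funext => tau.
  by rewrite /g; field.
split; [|split].
- by congr dot; apply/funext => j; congr Esamp; apply/funext => tau; rewrite mulrC.
- rewrite /gradf dot_Esamp fobjE -mulN1r -EsampZ; apply: ler_Esamp => tau _.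
  rewrite dotZr dotC (dot_row_sub A b) mulN1r.
  exact/pos_mul_subr_le/hybar.
- have sel_max (tau : {set 'I_m}) :
      #|tau| = beta -> forall i, i \in tau -> g i <= g (sel tau).
    move=> /hsel [_ sel_max] i /sel_max; rewrite /g.
    by apply: lerXn2r; rewrite nnegrE pos_ge0.
  rewrite fobjE mulNr lerN2.
  apply: le_trans (mean_le_Esamp_max hbeta sel_max).
  have m_gt0 : (0 < m)%N by case/andP: hbeta; apply: leq_trans.
  have mu1_ge0 : 0 <= mu1 by rewrite /mu1 mul1r invr_ge0 mulr_ge0 ?ler0n ?sqr_ge0.
  apply: le_trans (ler_wpM2l mu1_ge0 (hHoff y)) _.
  suff -> : mu1 * (L ^+ 2 * \sum_i g i) = (\sum_i g i) / m%:R by [].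
  by rewrite /mu1; field; rewrite pnatr_eq0 -lt0n m_gt0 lt0r_neq0.
Qed.
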